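(* Let $g>0$, $p_0<0$, $\gamma\in\mathbb{R}$, and let $\lambda_*>0$ with $\lambda_*-2\gamma p_0>0$ and $g-\gamma\sqrt{\lambda_*}\neq0$ satisfy the dispersion relation $$\frac{\lambda_*}{g-\gamma\sqrt{\lambda_*}}+\tanh\!\Big(\frac{2p_0}{\sqrt{\lambda_*}+\sqrt{\lambda_*-2\gamma p_0}}\Big)=0.$$ For $p\in[p_0,0]$ put $r(p)=\sqrt{\lambda_*-2\gamma p}$ and $r_0=r(p_0)$, and define $$H(p)=\frac{2(p-p_0)}{r(p)+r_0},\qquad Q^*=\lambda_*-\frac{4gp_0}{\sqrt{\lambda_*}+r_0},\qquad m(q,p)=\frac{r_0}{r(p)}\sinh(H(p))\cos q .$$ Assume $$\Delta:=(g-\gamma\sqrt{\lambda_*})^2-\lambda_*^2\neq0\qquad\text{and}\qquad 2gp_0+\lambda_*r_0+\sqrt{\lambda_*}\,r_0^2\neq0,$$ and set $$C_0=\frac{\sqrt{\lambda_*}\,\big[3g(g-\gamma\sqrt{\lambda_*})+\lambda_*(\gamma^2-\lambda_* )\big]\,(r_0+\sqrt{\lambda_*})}{4\,\Delta\,\big[2gp_0+\lambda_*r_0+\sqrt{\lambda_*}\,r_0^2\big]},\qquad C_2=\frac{3g(g-\gamma\sqrt{\lambda_*})+\lambda_*(\gamma^2-3\lambda_* )}{8\lambda_*^{5/2}} .$$ Define $$\begin{aligned}u(q,p)={}&r_0^2\Big[C_0\frac{H(p)}{r(p)}-\gamma\frac{1-\cosh(2H(p))}{8r^3(p)}+\frac{\sinh(2H(p))}{4r^2(p)}\Big]\\&+r_0^2\cos(2q)\Big[C_2\frac{\sinh(2H(p))}{r(p)}-\gamma\frac{1-\cosh(2H(p))}{8r^3(p)}+\frac{\sinh(2H(p))}{4r^2(p)}\Big],\end{aligned}$$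 and $h^*(q,p;b)=H(p)+b\,m(q,p)+b^2u(q,p)$. Then, with vorticity $\gamma$ and $Q=Q^*$: - the coefficients of $b^0,b^1,b^2$ in $\mathcal{H}[h^*](q,p)$ vanish identically on $R=[-\pi,\pi]\times[p_0,0]$; - the coefficients of $b^0,b^1,b^2$ in $\mathcal{B}_0[h^*](q)$ vanish for all $q$; - $\mathcal{B}_1[h^*]\equiv0$. That is, $\mathcal{H}[h^*]=\mathcal{O}(b^3)$, $\mathcal{B}_0[h^*]=\mathcal{O}(b^3)$ and $\mathcal{B}_1[h^*]=0$.
   Context: For a function $h(q,p)$ on the rectangle $R=[-\pi,\pi]\times[p_0,0]$, constants $g>0$ (gravity), $\gamma\in\mathbb{R}$ (vorticity), $Q\in\mathbb{R}$ (hydraulic head) and $p_0<0$ (relative mass flux), define $$\mathcal{H}[h]=(1+h_q^2)h_{pp}-2h_ph_qh_{pq}+h_p^2h_{qq}-\gamma h_p^3\quad\text{on } R,$$ $$\mathcal{B}_0[h](q)=1+h_q^2(q,0)+\big(2gh(q,0)-Q\big)h_p^2(q,0),\qquad \mathcal{B}_1[h](q)=h(q,p_0).$$ These are the equations for the height function in the Dubreil-Jacotin formulation of periodic travelling water waves with constant vorticity over a flat bed; $h$ is even and $2\pi$-periodic in $q$. When $h$ depends polynomially on a parameter $b$, these expressions are polynomials in $b$ with coefficients that are functions of $(q,p)$ (respectively of $q$). ''$=\mathcal{O}(b^k)$'' means the coefficients of $b^0,\dots,b^{k-1}$ vanish identically. The function $H$ is the laminar (trivial) solution and $m$ the solution of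 the linearised problem; for $\gamma=0$ the function $u$ reduces to the irrotational second-order term. *)

From Stdlib Require Import Reals ClassicalEpsilon.
Open Scope R_scope.

(* The derivative of f at x (the unique l with derivable_pt_lim f x l when f is
   differentiable at x; an unspecified value otherwise). *)
Definition Dx (f : R -> R) (x : R) : R :=
  epsilon (inhabits 0) (fun l => derivable_pt_lim f x l).

Definition d_q (h : R -> R -> R) (q p : R) : R := Dx (fun q' => h q' p) q.
Definition d_p (h : R -> R -> R) (q p : R) : R := Dx (fun p' => h q p') p.
Definition d_qq (h : R -> R -> R) (q p : R) : R := Dx (fun q' => d_q h q' p) q.
Definition d_pp (h : R -> R -> R) (q p : R) : R := Dx (fun p' => d_p h q p') p.
Definition d_pq (h : R -> R -> R) (q p : R) : R := Dx (fun q' => d_p h q' p) q.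

(* The operators of the Dubreil-Jacotin formulation. *)
Definition Hop (gamma : R) (h : R -> R -> R) (q p : R) : R :=
  (1 + (d_q h q p)^2) * d_pp h q p
  - 2 * d_p h q p * d_q h q p * d_pq h q p
  + (d_p h q p)^2 * d_qq h q p
  - gamma * (d_p h q p)^3.

Definition B0op (g Q : R) (h : R -> R -> R) (q : R) : R :=
  1 + (d_q h q 0)^2 + (2 * g * h q 0 - Q) * (d_p h q 0)^2.

Definition B1op (p0 : R) (h : R -> R -> R) (q : R) : R := h q p0.

(* "F(b) = O(b^3)" for an expression polynomial in b: F(b) = b^3 * P(b) for a
   polynomial P, i.e. the coefficients of b^0, b^1, b^2 vanish. *)
Definition is_O_b3 (F : R -> R) : Prop :=
  exists (n : nat) (c : nat -> R),
    forall b, F b = b^3 * sum_f_R0 (fun k => c k * b^k) n.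

Definition rr (lam gamma p : R) : R := sqrt (lam - 2 * gamma * p).
Definition r0 (lam gamma p0 : R) : R := rr lam gamma p0.

Definition Hlam (lam gamma p0 p : R) : R :=
  2 * (p - p0) / (rr lam gamma p + r0 lam gamma p0).

Definition Qstar (g lam gamma p0 : R) : R :=
  lam - 4 * g * p0 / (sqrt lam + r0 lam gamma p0).

Definition mlin (lam gamma p0 q p : R) : R :=
  r0 lam gamma p0 / rr lam gamma p * sinh (Hlam lam gamma p0 p) * cos q.

Definition Delta_w (g lam gamma : R) : R := (g - gamma * sqrt lam)^2 - lam^2.

Definition Den0 (g lam gamma p0 : R) : R :=
  2 * g * p0 + lam * r0 lam gamma p0 + sqrt lam * (r0 lam gamma p0)^2.

Definition C0 (g lam gamma p0 : R) : R :=
  sqrt lam * (3 * g * (g - gamma * sqrt lam) + lam * (gamma^2 - lam))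
  * (r0 lam gamma p0 + sqrt lam)
  / (4 * Delta_w g lam gamma * Den0 g lam gamma p0).

Definition C2 (g lam gamma : R) : R :=
  (3 * g * (g - gamma * sqrt lam) + lam * (gamma^2 - 3 * lam))
  / (8 * (sqrt lam)^5).

Definition u2 (g lam gamma p0 q p : R) : R :=
  let r := rr lam gamma p in
  let R0 := r0 lam gamma p0 in
  let Hp := Hlam lam gamma p0 p in
  R0^2 * (C0 g lam gamma p0 * Hp / r
          - gamma * (1 - cosh (2 * Hp)) / (8 * r^3)
          + sinh (2 * Hp) / (4 * r^2))
  + R0^2 * cos (2 * q) *
         (C2 g lam gamma * sinh (2 * Hp) / r
          - gamma * (1 - cosh (2 * Hp)) / (8 * r^3)
          + sinh (2 * Hp) / (4 * r^2)).

Definition hstar (g lam gamma p0 b : R) (q p : R) : R :=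
  Hlam lam gamma p0 p + b * mlin lam gamma p0 q p + b^2 * u2 g lam gamma p0 q p.

(* Write r = sqrt (lam - 2 gamma p), H = H(p) and E = exp H.  Along p these satisfy
   r' = -gamma/r, H' = 1/r and E' = E/r, so h* and all its partial derivatives of
   order at most two are polynomials of degree two in b whose coefficients are
   rational functions of r, H, E and of cos q, sin q, cos 2q, sin 2q.  The
   coefficients of b^0, b^1, b^2 in the interior operator then vanish as rational
   identities (at order b^2 after sin^2 q = 1 - cos^2 q), whatever C0 and C2 are.
   On the surface p = 0 one has r = sqrt lam, the dispersion relation reads
   g = gamma sqrt lam + lam coth H(0), and gamma = (lam - r0^2) / (2 p0); after these
   substitutions the Bernoulli condition at orders b^0 and b^1 is an identity, and at
   order b^2 it is exactly what the values of C0 (q-independent part) and C2 (cos 2q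
   part) are chosen for. *)

From Stdlib Require Import Reals Lra Lia List ClassicalEpsilon.
From Coquelicot Require Import Coquelicot.
Open Scope R_scope.
Import ListNotations.

Fixpoint peval (l : list R) (b : R) : R :=
  match l with nil => 0 | a :: l' => a + b * peval l' b end.

Fixpoint padd (l m : list R) : list R :=
  match l, m with
  | nil, _ => m
  | _, nil => l
  | a :: l', c :: m' => (a + c) :: padd l' m'
  end.

Definition pscal (a : R) (l : list R) : list R := map (fun x => a * x) l.

Fixpoint pmul (l m : list R) : list R :=
  match l with
  | nil => nil
  | a :: l' => padd (pscal a m) (0 :: pmul l' m)
  end.

Lemma peval_padd l m b : peval (padd l m) b = peval l b + peval m b.
Proof.
  revert m; induction l as [|a l IH]; intros [|c m]; simpl; try rewrite IH; ring.
Qed.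

Lemma peval_pscal a l b : peval (pscal a l) b = a * peval l b.
Proof. induction l as [|x l IH]; simpl; [|rewrite IH]; ring. Qed.

Lemma peval_pmul l m b : peval (pmul l m) b = peval l b * peval m b.
Proof.
  induction l as [|a l IH]; simpl; [ring|].
  rewrite peval_padd, peval_pscal; simpl; rewrite IH; ring.
Qed.

Lemma peval_sum_f_R0 l b :
  peval l b = sum_f_R0 (fun k => nth k l 0 * b ^ k) (length l).
Proof.
  induction l as [|a l IH]; [simpl; ring|].
  change (a + b * peval l b = sum_f_R0 (fun k => nth k (a :: l) 0 * b ^ k) (S (length l))).
  rewrite decomp_sum by lia; simpl pred.
  rewrite IH, scal_sum. f_equal; [simpl; ring|].
  apply sum_eq; intros i _; simpl; ring.
Qed.

Lemma is_O_b3_peval (F : R -> R) l :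
  (forall b, F b = peval l b) ->
  nth 0 l 0 = 0 -> nth 1 l 0 = 0 -> nth 2 l 0 = 0 -> is_O_b3 F.
Proof.
  intros HF h0 h1 h2.
  destruct l as [|a0 [|a1 [|a2 l]]]; simpl in h0, h1, h2; subst.
  1-3: exists 0%nat, (fun _ => 0); intros b; rewrite HF; simpl; ring.
  exists (length l), (fun k => nth k l 0); intros b.
  rewrite HF, <- peval_sum_f_R0; simpl; ring.
Qed.

(** * Derivatives along the profile *)

Ltac rewrite_Derive H :=
  match type of H with
  | is_derive ?f ?x ?l =>
      replace (Derive (fun y : R => f y) x) with l
        by (symmetry; apply is_derive_unique; exact H)
  end.

(* The coefficients in b of a + b (m c) + b^2 (u + v c2), where c and c2 stand
   for cos q and cos 2q or for their q-derivatives. *)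
Definition expansion (a m u v c c2 : R) : list R := [a; c * m; u + c2 * v].

Lemma peval_expansion a m u v c c2 b :
  peval (expansion a m u v c c2) b = a + b * (c * m) + b ^ 2 * (u + c2 * v).
Proof. simpl; ring. Qed.

Lemma is_derive_expansion (a m u v : R -> R) a' m' u' v' c c2 b p :
  is_derive a p a' -> is_derive m p m' -> is_derive u p u' -> is_derive v p v' ->
  is_derive (fun y => peval (expansion (a y) (m y) (u y) (v y) c c2) b) p
    (peval (expansion a' m' u' v' c c2) b).
Proof.
  intros Ha Hm Hu Hv.
  apply is_derive_ext with (fun y => a y + b * (c * m y) + b ^ 2 * (u y + c2 * v y)).
  { intros y; symmetry; apply peval_expansion. }
  rewrite peval_expansion.
  auto_derive.
  - repeat split; eexists; eassumption.
  - rewrite_Derive Ha; rewrite_Derive Hm; rewrite_Derive Hu; rewrite_Derive Hv; ring.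
Qed.

Lemma is_derive_expansion_cos a m u v b q :
  is_derive (fun y => peval (expansion a m u v (cos y) (cos (2 * y))) b) q
    (peval (expansion 0 m 0 v (- sin q) (-2 * sin (2 * q))) b).
Proof. rewrite peval_expansion; simpl; auto_derive; [exact I | ring]. Qed.

Lemma is_derive_expansion_sin m v b q :
  is_derive (fun y => peval (expansion 0 m 0 v (- sin y) (-2 * sin (2 * y))) b) q
    (peval (expansion 0 m 0 v (- cos q) (-4 * cos (2 * q))) b).
Proof. simpl; auto_derive; [exact I | ring]. Qed.

(* sinh and cosh through E = exp x, so that [field] can treat E as an indeterminate. *)
Definition sh (E : R) : R := (E - / E) / 2.
Definition ch (E : R) : R := (E + / E) / 2.

Lemma sinh_sh x : sinh x = sh (exp x).
Proof. unfold sinh, sh; now rewrite exp_Ropp. Qed.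

Lemma exp_double x : exp (2 * x) = exp x * exp x.
Proof. now rewrite <- exp_plus; replace (x + x) with (2 * x) by ring. Qed.

Lemma sinh_double_sh x : sinh (2 * x) = sh (exp x * exp x).
Proof. now rewrite sinh_sh, exp_double. Qed.

Lemma cosh_double_ch x : cosh (2 * x) = ch (exp x * exp x).
Proof. unfold cosh, ch; now rewrite exp_Ropp, exp_double. Qed.

(* m = R0 cos q * mode1 and u = R0^2 (mode0 + cos 2q * mode2); the primes are
   derivatives along the profile r' = -gam/r, H' = 1/r, E' = E/r. *)
Definition mode1 (r E : R) : R := sh E / r.
Definition mode1' (gam r E : R) : R := ch E / r ^ 2 + gam * sh E / r ^ 3.
Definition mode1'' (gam r E : R) : R :=
  sh E / r ^ 3 + 3 * gam * ch E / r ^ 4 + 3 * gam ^ 2 * sh E / r ^ 5.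

Definition wtail (gam r E : R) : R :=
  - gam * (1 - ch (E * E)) / (8 * r ^ 3) + sh (E * E) / (4 * r ^ 2).
Definition wtail' (gam r E : R) : R :=
  gam / 8 * (2 * sh (E * E) / r ^ 4 + 3 * gam * (ch (E * E) - 1) / r ^ 5)
  + 1 / 4 * (2 * ch (E * E) / r ^ 3 + 2 * gam * sh (E * E) / r ^ 4).
Definition wtail'' (gam r E : R) : R :=
  gam / 8 * (4 * ch (E * E) / r ^ 5 + 14 * gam * sh (E * E) / r ^ 6
             + 15 * gam ^ 2 * (ch (E * E) - 1) / r ^ 7)
  + 1 / 4 * (4 * sh (E * E) / r ^ 4 + 10 * gam * ch (E * E) / r ^ 5
             + 8 * gam ^ 2 * sh (E * E) / r ^ 6).

Definition mode0 (gam C0 r H E : R) : R := C0 * H / r + wtail gam r E.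
Definition mode0' (gam C0 r H E : R) : R :=
  C0 * (1 / r ^ 2 + gam * H / r ^ 3) + wtail' gam r E.
Definition mode0'' (gam C0 r H E : R) : R :=
  C0 * (3 * gam / r ^ 4 + 3 * gam ^ 2 * H / r ^ 5) + wtail'' gam r E.

Definition mode2 (gam C2 r E : R) : R := C2 * sh (E * E) / r + wtail gam r E.
Definition mode2' (gam C2 r E : R) : R :=
  C2 * (2 * ch (E * E) / r ^ 2 + gam * sh (E * E) / r ^ 3) + wtail' gam r E.
Definition mode2'' (gam C2 r E : R) : R :=
  C2 * (4 * sh (E * E) / r ^ 3 + 6 * gam * ch (E * E) / r ^ 4
        + 3 * gam ^ 2 * sh (E * E) / r ^ 5) + wtail'' gam r E.

Definition coefs_h gam R0 C0 C2 c c2 r H E : list R :=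
  expansion H (R0 * mode1 r E) (R0 ^ 2 * mode0 gam C0 r H E) (R0 ^ 2 * mode2 gam C2 r E) c c2.
Definition coefs_hp gam R0 C0 C2 c c2 r H E : list R :=
  expansion (/ r) (R0 * mode1' gam r E) (R0 ^ 2 * mode0' gam C0 r H E)
    (R0 ^ 2 * mode2' gam C2 r E) c c2.
Definition coefs_hpp gam R0 C0 C2 c c2 r H E : list R :=
  expansion (gam / r ^ 3) (R0 * mode1'' gam r E) (R0 ^ 2 * mode0'' gam C0 r H E)
    (R0 ^ 2 * mode2'' gam C2 r E) c c2.
Definition coefs_hq gam R0 C2 s s2 r E : list R :=
  expansion 0 (R0 * mode1 r E) 0 (R0 ^ 2 * mode2 gam C2 r E) (- s) (-2 * s2).
Definition coefs_hqq gam R0 C2 c c2 r E : list R :=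
  expansion 0 (R0 * mode1 r E) 0 (R0 ^ 2 * mode2 gam C2 r E) (- c) (-4 * c2).
Definition coefs_hpq gam R0 C2 s s2 r E : list R :=
  expansion 0 (R0 * mode1' gam r E) 0 (R0 ^ 2 * mode2' gam C2 r E) (- s) (-2 * s2).

Section Profile.

Variables (gam : R) (r H E : R -> R) (p : R).
Hypotheses (r_deriv : is_derive r p (- gam / r p)) (H_deriv : is_derive H p (/ r p))
  (E_deriv : is_derive E p (E p / r p)) (r_neq0 : r p <> 0) (E_neq0 : E p <> 0).

Ltac profile_derive :=
  auto_derive;
  [ repeat split; try (eexists; eassumption);
    repeat apply Rmult_integral_contrapositive_currified; auto; lra
  | rewrite_Derive r_deriv; rewrite_Derive H_deriv; rewrite_Derive E_deriv;
    field; repeat split; auto ].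

Lemma is_derive_inv_profile : is_derive (fun y => / r y) p (gam / r p ^ 3).
Proof. profile_derive. Qed.

Lemma is_derive_mode1 : is_derive (fun y => mode1 (r y) (E y)) p (mode1' gam (r p) (E p)).
Proof. unfold mode1, mode1', sh, ch; profile_derive. Qed.

Lemma is_derive_mode1' :
  is_derive (fun y => mode1' gam (r y) (E y)) p (mode1'' gam (r p) (E p)).
Proof. unfold mode1', mode1'', sh, ch; profile_derive. Qed.

Lemma is_derive_mode0 C0 :
  is_derive (fun y => mode0 gam C0 (r y) (H y) (E y)) p (mode0' gam C0 (r p) (H p) (E p)).
Proof. unfold mode0, mode0', wtail, wtail', sh, ch; profile_derive. Qed.

Lemma is_derive_mode0' C0 :
  is_derive (fun y => mode0' gam C0 (r y) (H y) (E y)) p (mode0'' gam C0 (r p) (H p) (E p)).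
Proof. unfold mode0', mode0'', wtail', wtail'', sh, ch; profile_derive. Qed.

Lemma is_derive_mode2 C2 :
  is_derive (fun y => mode2 gam C2 (r y) (E y)) p (mode2' gam C2 (r p) (E p)).
Proof. unfold mode2, mode2', wtail, wtail', sh, ch; profile_derive. Qed.

Lemma is_derive_mode2' C2 :
  is_derive (fun y => mode2' gam C2 (r y) (E y)) p (mode2'' gam C2 (r p) (E p)).
Proof. unfold mode2', mode2'', wtail', wtail'', sh, ch; profile_derive. Qed.

Lemma is_derive_coefs_h R0 C0 C2 c c2 b :
  is_derive (fun y => peval (coefs_h gam R0 C0 C2 c c2 (r y) (H y) (E y)) b) p
    (peval (coefs_hp gam R0 C0 C2 c c2 (r p) (H p) (E p)) b).
Proof.
  apply is_derive_expansion; [exact H_deriv | ..];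
    apply is_derive_scal; auto using is_derive_mode1, is_derive_mode0, is_derive_mode2.
Qed.

Lemma is_derive_coefs_hp R0 C0 C2 c c2 b :
  is_derive (fun y => peval (coefs_hp gam R0 C0 C2 c c2 (r y) (H y) (E y)) b) p
    (peval (coefs_hpp gam R0 C0 C2 c c2 (r p) (H p) (E p)) b).
Proof.
  apply is_derive_expansion; [exact is_derive_inv_profile | ..];
    apply is_derive_scal; auto using is_derive_mode1', is_derive_mode0', is_derive_mode2'.
Qed.

End Profile.

Lemma rr_pos lam gam p : 0 < lam - 2 * gam * p -> 0 < rr lam gam p.
Proof. apply sqrt_lt_R0. Qed.

Lemma rr_sqr lam gam p : 0 < lam - 2 * gam * p -> rr lam gam p ^ 2 = lam - 2 * gam * p.
Proof. intros Hp; unfold rr; rewrite pow2_sqrt; lra. Qed.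

Lemma radicand_locally_pos lam gam p :
  0 < lam - 2 * gam * p -> locally p (fun y => 0 < lam - 2 * gam * y).
Proof.
  intros Hp.
  assert (Hc : continuous (fun y => lam - 2 * gam * y) p)
    by (apply continuity_pt_filterlim; reg).
  apply (Hc (fun z => 0 < z)), open_gt, Hp.
Qed.

Lemma is_derive_rr lam gam p :
  0 < lam - 2 * gam * p -> is_derive (rr lam gam) p (- gam / rr lam gam p).
Proof.
  intros Hp; pose proof (rr_pos _ _ _ Hp); unfold rr in *.
  auto_derive; [lra | unfold Rminus in *; field; lra].
Qed.

Lemma is_derive_Hlam lam gam p0 p :
  0 < lam - 2 * gam * p0 -> 0 < lam - 2 * gam * p ->
  is_derive (Hlam lam gam p0) p (/ rr lam gam p).
Proof.
  intros Hp0 Hp.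
  pose proof (rr_pos _ _ _ Hp0); pose proof (rr_pos _ _ _ Hp).
  pose proof (rr_sqr _ _ _ Hp0); pose proof (rr_sqr _ _ _ Hp).
  pose proof (is_derive_rr _ _ _ Hp) as Hr.
  unfold Hlam, r0. auto_derive.
  - split; [eexists; exact Hr | split; [lra | exact I]].
  - rewrite_Derive Hr.
    set (s := rr lam gam p) in *; set (s0 := rr lam gam p0) in *.
    (* 2 gam (p - p0) = s0^2 - s^2 turns the quotient rule into 1/s. *)
    transitivity (2 / (s + s0) + 2 * (gam * (p - p0)) / (s * (s + s0) * (s + s0)));
      [field; lra|].
    replace (gam * (p - p0)) with ((s0 ^ 2 - s ^ 2) / 2) by lra.
    field; lra.
Qed.

Lemma is_derive_exp_Hlam lam gam p0 p :
  0 < lam - 2 * gam * p0 -> 0 < lam - 2 * gam * p ->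
  is_derive (fun y => exp (Hlam lam gam p0 y)) p (exp (Hlam lam gam p0 p) / rr lam gam p).
Proof.
  intros Hp0 Hp; pose proof (is_derive_Hlam _ _ _ _ Hp0 Hp) as HH.
  auto_derive; [eexists; exact HH | rewrite_Derive HH; unfold Rdiv; ring].
Qed.

Lemma Dx_is_derive f x l : is_derive f x l -> Dx f x = l.
Proof.
  intros Hl. apply is_derive_Reals in Hl. unfold Dx.
  apply (uniqueness_limite f x); [|exact Hl].
  apply (epsilon_spec (inhabits 0) (fun l' => derivable_pt_lim f x l')).
  now exists l.
Qed.

Section Hstar.

Variables (g lam gam p0 : R).
Hypothesis radicand_p0 : 0 < lam - 2 * gam * p0.

Local Notation R0 := (r0 lam gam p0).
Local Notation C0' := (C0 g lam gam p0).
Local Notation C2' := (C2 g lam gam).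
Local Notation r := (rr lam gam).
Local Notation H := (Hlam lam gam p0).
Local Notation E p := (exp (Hlam lam gam p0 p)).

Ltac profile_facts :=
  first [ now apply is_derive_rr | now apply is_derive_Hlam | now apply is_derive_exp_Hlam
        | now apply Rgt_not_eq, rr_pos | apply Rgt_not_eq, exp_pos ].

Lemma hstar_expansion b q p :
  hstar g lam gam p0 b q p
  = peval (coefs_h gam R0 C0' C2' (cos q) (cos (2 * q)) (r p) (H p) (E p)) b.
Proof.
  unfold hstar, mlin, u2, coefs_h, mode1, mode0, mode2, wtail; cbv zeta.
  rewrite peval_expansion, !sinh_double_sh, !cosh_double_ch, sinh_sh.
  unfold Rdiv, Rminus; ring.
Qed.

Lemma d_q_hstar b q p :
  d_q (hstar g lam gam p0 b) q p
  = peval (coefs_hq gam R0 C2' (sin q) (sin (2 * q)) (r p) (E p)) b.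
Proof.
  apply Dx_is_derive.
  eapply is_derive_ext; [intros y; symmetry; apply hstar_expansion|].
  apply is_derive_expansion_cos.
Qed.

Lemma d_qq_hstar b q p :
  d_qq (hstar g lam gam p0 b) q p
  = peval (coefs_hqq gam R0 C2' (cos q) (cos (2 * q)) (r p) (E p)) b.
Proof.
  apply Dx_is_derive.
  eapply is_derive_ext; [intros y; symmetry; apply d_q_hstar|].
  apply is_derive_expansion_sin.
Qed.

Lemma d_p_hstar b q p : 0 < lam - 2 * gam * p ->
  d_p (hstar g lam gam p0 b) q p
  = peval (coefs_hp gam R0 C0' C2' (cos q) (cos (2 * q)) (r p) (H p) (E p)) b.
Proof.
  intros Hp; apply Dx_is_derive.
  eapply is_derive_ext; [intros y; symmetry; apply hstar_expansion|].
  apply is_derive_coefs_h with (r := r) (H := H) (E := fun y => E y); profile_facts.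
Qed.

Lemma d_pq_hstar b q p : 0 < lam - 2 * gam * p ->
  d_pq (hstar g lam gam p0 b) q p
  = peval (coefs_hpq gam R0 C2' (sin q) (sin (2 * q)) (r p) (E p)) b.
Proof.
  intros Hp; apply Dx_is_derive.
  eapply is_derive_ext; [intros y; symmetry; now apply d_p_hstar|].
  apply is_derive_expansion_cos.
Qed.

Lemma d_pp_hstar b q p : 0 < lam - 2 * gam * p ->
  d_pp (hstar g lam gam p0 b) q p
  = peval (coefs_hpp gam R0 C0' C2' (cos q) (cos (2 * q)) (r p) (H p) (E p)) b.
Proof.
  intros Hp; apply Dx_is_derive.
  eapply is_derive_ext_loc.
  { eapply filter_imp; [|exact (radicand_locally_pos _ _ _ Hp)].
    intros y Hy; symmetry; now apply d_p_hstar. }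
  apply is_derive_coefs_hp with (r := r) (H := H) (E := fun y => E y); profile_facts.
Qed.

End Hstar.

(** * The interior equation *)

Definition Hop_poly gam hq hp hqq hpp hpq : list R :=
  padd (padd (padd (pmul (padd [1] (pmul hq hq)) hpp) (pscal (-2) (pmul (pmul hp hq) hpq)))
     (pmul (pmul hp hp) hqq)) (pscal (- gam) (pmul (pmul hp hp) hp)).

Lemma peval_Hop_poly gam hq hp hqq hpp hpq b :
  peval (Hop_poly gam hq hp hqq hpp hpq) b
  = (1 + (peval hq b) ^ 2) * peval hpp b - 2 * peval hp b * peval hq b * peval hpq b
    + (peval hp b) ^ 2 * peval hqq b - gam * (peval hp b) ^ 3.
Proof.
  unfold Hop_poly; rewrite !peval_padd, !peval_pscal, !peval_pmul, !peval_padd, !peval_pmul.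
  simpl; ring.
Qed.

Definition Hop_profile gam R0 C0 C2 c s s2 r H E : list R :=
  let c2 := 2 * c * c - 1 in
  Hop_poly gam (coefs_hq gam R0 C2 s s2 r E) (coefs_hp gam R0 C0 C2 c c2 r H E)
    (coefs_hqq gam R0 C2 c c2 r E) (coefs_hpp gam R0 C0 C2 c c2 r H E)
    (coefs_hpq gam R0 C2 s s2 r E).

(* An expression F s that is even and quadratic in s depends on s only through s^2
   = 1 - c^2; [match_even] abstracts the goal over s to apply this. *)
Lemma even_quadratic_eq0 (F : R -> R) s c : s * s = 1 - c * c ->
  (forall x, F x = F 0 + x * x * (F 1 - F 0)) -> F 0 + (1 - c * c) * (F 1 - F 0) = 0 ->
  F s = 0.
Proof. intros Hs HF H0; now rewrite HF, Hs. Qed.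

Ltac match_even s c Hs :=
  match goal with |- ?L = 0 =>
    let t := eval pattern s in L in
    match t with ?F _ => apply (even_quadratic_eq0 F s c Hs) end
  end.

Lemma Hop_profile_low_coefs gam R0 C0 C2 c s s2 r H E :
  r <> 0 -> E <> 0 -> s * s = 1 - c * c ->
  let P := Hop_profile gam R0 C0 C2 c s s2 r H E in
  nth 0 P 0 = 0 /\ nth 1 P 0 = 0 /\ nth 2 P 0 = 0.
Proof.
  intros Hr HE Hs; cbn.
  repeat split.
  - field; auto.
  - unfold mode1, mode1', mode1'', sh, ch; field; auto.
  - match_even s c Hs.
    + intros x; field; auto.
    + unfold mode1, mode1', mode1'', mode0', mode0'', mode2, mode2', mode2'',
        wtail, wtail', wtail'', sh, ch.
      field; auto.
Qed.

Lemma radicand_between lam gam p0 p :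
  0 < lam -> 0 < lam - 2 * gam * p0 -> p0 <= p <= 0 -> 0 < lam - 2 * gam * p.
Proof. intros lam_pos Hp0 Hp; destruct (Rle_dec 0 gam); nra. Qed.

Lemma sin_sqr_eq q : sin q * sin q = 1 - cos q * cos q.
Proof. pose proof (sin2 q); unfold Rsqr in *; lra. Qed.

Lemma Hop_hstar_O_b3 g lam gam p0 q p :
  0 < lam - 2 * gam * p0 -> 0 < lam - 2 * gam * p ->
  is_O_b3 (fun b => Hop gam (hstar g lam gam p0 b) q p).
Proof.
  intros Hp0 Hp.
  destruct (Hop_profile_low_coefs gam (r0 lam gam p0) (C0 g lam gam p0) (C2 g lam gam)
              (cos q) (sin q) (sin (2 * q)) (rr lam gam p) (Hlam lam gam p0 p)
              (exp (Hlam lam gam p0 p))) as (coef0 & coef1 & coef2).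
  - now apply Rgt_not_eq, rr_pos.
  - apply Rgt_not_eq, exp_pos.
  - apply sin_sqr_eq.
  - refine (is_O_b3_peval _ _ _ coef0 coef1 coef2); intros b.
    unfold Hop; rewrite d_q_hstar, d_p_hstar, d_qq_hstar, d_pp_hstar, d_pq_hstar by assumption.
    rewrite !cos_2a_cos; unfold Hop_profile; cbv zeta.
    now rewrite peval_Hop_poly.
Qed.

(** * The boundary conditions *)

Definition B0_poly g Q hq h hp : list R :=
  padd [1] (padd (pmul hq hq) (pmul (padd (pscal (2 * g) h) [- Q]) (pmul hp hp))).

Lemma peval_B0_poly g Q hq h hp b :
  peval (B0_poly g Q hq h hp) b
  = 1 + (peval hq b) ^ 2 + (2 * g * peval h b - Q) * (peval hp b) ^ 2.
Proof.
  unfold B0_poly; rewrite !peval_padd, !peval_pmul, !peval_padd, !peval_pscal.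
  simpl; ring.
Qed.

Definition B0_profile g Q gam R0 C0 C2 c s s2 r H E : list R :=
  let c2 := 2 * c * c - 1 in
  B0_poly g Q (coefs_hq gam R0 C2 s s2 r E) (coefs_h gam R0 C0 C2 c c2 r H E)
    (coefs_hp gam R0 C0 C2 c c2 r H E).

Lemma dispersion_coth g lam gam L y :
  0 < y -> g - gam * L <> 0 -> lam / (g - gam * L) + tanh (- y) = 0 ->
  g = gam * L + lam * (exp y * exp y + 1) / (exp y * exp y - 1).
Proof.
  intros Hy Hg Hdisp.
  assert (E1 : 1 < exp y) by (rewrite <- exp_0; now apply exp_increasing).
  unfold tanh, sinh, cosh in Hdisp; rewrite Ropp_involutive, exp_Ropp in Hdisp.
  set (E := exp y) in *.
  assert (Ht : lam / (g - gam * L) = (E * E - 1) / (E * E + 1)).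
  { apply (Rplus_eq_reg_r ((/ E - E) / 2 / ((/ E + E) / 2))).
    rewrite Hdisp; field; split; [lra | nra]. }
  replace lam with (lam / (g - gam * L) * (g - gam * L)) by (field; exact Hg).
  rewrite Ht; field; nra.
Qed.

Lemma B0_profile_low_coefs g lam gam p0 E c s s2 :
  0 < lam -> 0 < lam - 2 * gam * p0 -> p0 <> 0 -> E <> 0 -> E * E - 1 <> 0 ->
  g = gam * sqrt lam + lam * (E * E + 1) / (E * E - 1) ->
  Delta_w g lam gam <> 0 -> Den0 g lam gam p0 <> 0 -> s * s = 1 - c * c ->
  let P := B0_profile g (Qstar g lam gam p0) gam (r0 lam gam p0) (C0 g lam gam p0)
             (C2 g lam gam) c s s2 (sqrt lam)
             (2 * (0 - p0) / (sqrt lam + r0 lam gam p0)) E in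
  nth 0 P 0 = 0 /\ nth 1 P 0 = 0 /\ nth 2 P 0 = 0.
Proof.
  intros lam_pos Hp0 p0_neq0 E_neq0 E2_neq1 Hg HDelta HDen Hs; cbn.
  unfold Qstar, C0, C2, Delta_w, Den0 in *.
  assert (HL : 0 < sqrt lam) by now apply sqrt_lt_R0.
  assert (HR : 0 < r0 lam gam p0) by now apply rr_pos.
  assert (L2 : sqrt lam ^ 2 = lam) by (apply pow2_sqrt; lra).
  assert (R2 : r0 lam gam p0 ^ 2 = lam - 2 * gam * p0) by now apply rr_sqr.
  set (L := sqrt lam) in *; set (Rz := r0 lam gam p0) in *; clearbody L Rz.
  subst lam.
  assert (Hgam : gam = (L ^ 2 - Rz ^ 2) / (2 * p0)) by (rewrite R2; field; auto).
  clear R2; subst g.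
  repeat split.
  - field; lra.
  - unfold mode1, mode1', sh, ch; field; repeat split; auto; lra.
  - subst gam. match_even s c Hs.
    + intros x; field; repeat split; auto; lra.
    + unfold mode1, mode1', mode0, mode0', mode2, mode2', wtail, wtail', sh, ch.
      (* the remaining side conditions are Den0 <> 0 and Delta_w <> 0, cleared of
         denominators *)
      field; repeat split; auto; try lra.
      * intros Hz; apply HDen; apply (Rmult_eq_reg_r (E * E - 1)); [|exact E2_neq1].
        match type of Hz with ?y = 0 => transitivity y end; [field; auto | lra].
      * intros Hz; apply HDelta.
        apply (Rmult_eq_reg_r ((E * E - 1) ^ 2 * (4 * p0 ^ 2)));
          [|repeat apply Rmult_integral_contrapositive_currified;
            try apply pow_nonzero; auto; lra].
        match type of Hz with ?y = 0 => transitivity y end; [field; auto | lra].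
Qed.

Lemma B0op_hstar_O_b3 g lam gam p0 q :
  0 < lam -> p0 < 0 -> 0 < lam - 2 * gam * p0 -> g - gam * sqrt lam <> 0 ->
  lam / (g - gam * sqrt lam)
  + tanh (2 * p0 / (sqrt lam + sqrt (lam - 2 * gam * p0))) = 0 ->
  Delta_w g lam gam <> 0 -> Den0 g lam gam p0 <> 0 ->
  is_O_b3 (fun b => B0op g (Qstar g lam gam p0) (hstar g lam gam p0 b) q).
Proof.
  intros lam_pos p0_neg Hrad Hne Hdisp HDelta HDen.
  assert (r_surf : rr lam gam 0 = sqrt lam) by (unfold rr; f_equal; ring).
  assert (HL : 0 < sqrt lam) by now apply sqrt_lt_R0.
  assert (HR : 0 < r0 lam gam p0) by now apply rr_pos.
  set (y := 2 * (0 - p0) / (sqrt lam + r0 lam gam p0)).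
  assert (H_surf : Hlam lam gam p0 0 = y) by (unfold Hlam; now rewrite r_surf).
  assert (Hy : 0 < y) by (apply Rdiv_lt_0_compat; lra).
  assert (E_gt1 : 1 < exp y) by (rewrite <- exp_0; now apply exp_increasing).
  destruct (B0_profile_low_coefs g lam gam p0 (exp y) (cos q) (sin q) (sin (2 * q)))
    as (coef0 & coef1 & coef2); auto; try lra.
  - nra.
  - apply dispersion_coth; [exact Hy | exact Hne |].
    replace (- y) with (2 * p0 / (sqrt lam + sqrt (lam - 2 * gam * p0)));
      [exact Hdisp | unfold y, r0, rr; field; fold (rr lam gam p0); fold (r0 lam gam p0); lra].
  - apply sin_sqr_eq.
  - refine (is_O_b3_peval _ _ _ coef0 coef1 coef2); intros b.
    unfold B0op; rewrite d_q_hstar, d_p_hstar, hstar_expansion by lra.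
    rewrite r_surf, H_surf, !cos_2a_cos; unfold B0_profile; cbv zeta.
    now rewrite peval_B0_poly.
Qed.

Lemma hstar_bottom g lam gam p0 b q : hstar g lam gam p0 b q p0 = 0.
Proof.
  rewrite hstar_expansion.
  replace (Hlam lam gam p0 p0) with 0 by (unfold Hlam; unfold Rdiv; ring).
  unfold coefs_h, mode1, mode0, mode2, wtail, sh, ch.
  rewrite exp_0, Rmult_1_r, Rinv_1; replace ((1 + 1) / 2) with 1 by field.
  rewrite !Rminus_diag; simpl; unfold Rdiv; ring.
Qed.

Theorem mainTheorem3 (g p0 gamma lam : R)
  (hg : 0 < g) (hp0 : p0 < 0) (hlam : 0 < lam)
  (hlam2 : 0 < lam - 2 * gamma * p0)
  (hne : g - gamma * sqrt lam <> 0)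
  (hdisp : lam / (g - gamma * sqrt lam)
           + tanh (2 * p0 / (sqrt lam + sqrt (lam - 2 * gamma * p0))) = 0)
  (hDelta : Delta_w g lam gamma <> 0)
  (hDen0 : Den0 g lam gamma p0 <> 0) :
  (forall q p, -PI <= q <= PI -> p0 <= p <= 0 ->
     is_O_b3 (fun b => Hop gamma (hstar g lam gamma p0 b) q p))
  /\ (forall q,
     is_O_b3 (fun b => B0op g (Qstar g lam gamma p0) (hstar g lam gamma p0 b) q))
  /\ (forall q b, B1op p0 (hstar g lam gamma p0 b) q = 0).
Proof.
  split; [|split].
  - intros q p _ Hp.
    apply Hop_hstar_O_b3; [exact hlam2 | now apply (radicand_between _ _ p0)].
  - intros q; now apply B0op_hstar_O_b3.
  - intros q b; apply hstar_bottom.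
Qed.
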